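(* Let $3\le n\le k$ be integers and let $X$ be the discrete-time Markov chain on $\mathbb{N}^{n-1}$ described in the context. Fix $j\in\{1,\dots,n-1\}$ and let $\mathbf{x}_j=(0,\dots,0,x_{j+1},\dots,x_{n-1})$ with the first $j$ entries equal to $0$ and $x_i\ge1$ for $i=j+1,\dots,n-1$. Then for every $\mathbf{r}=(r_1,\dots,r_{n-1})\in E_j$, setting $\mathbf{r}(\mathbf{x}_j)=\mathbf{x}_j+\mathbf{r}\in S^\star$, $$q^\star(\mathbf{x}_j,\mathbf{r}(\mathbf{x}_j))=\binom{k-n+j+1}{k-n+1}\frac{(|\mathbf{r}|-1)!}{r_1!\cdots r_{n-1}!}\Big(\frac1k\Big)^{|\mathbf{r}|}\sum_{l=1}^{j}\mathds{1}_{\{r_l=1\}},$$ and $\sum_{\mathbf{r}\in E_j}q^\star(\mathbf{x}_j,\mathbf{r}(\mathbf{x}_j))=1$. Moreover, $q^\star(\mathbf{x}_j,\mathbf{x}')=0$ for every $\mathbf{x}'\in S^\star$ that is not of the form $\mathbf{x}_j+\mathbf{r}$ with $\mathbf{r}\in E_j$.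
   Context: $\mathbb{N}=\{0,1,2,\dots\}$, $|\mathbf{r}|=r_1+\dots+r_{n-1}$. $\mathbf{0}$, $\mathbf{1}$ are the all-zero and all-one vectors of dimension $n-1$, $\mathbf{e}_l$ the $l$-th unit vector. For $j=0,\dots,n-1$, $R_j$ is the set of $\mathbf{x}\in\mathbb{N}^{n-1}$ with exactly $j$ zero entries. $X$ is the Markov chain on $\mathbb{N}^{n-1}$ with nonzero transition probabilities: from $\mathbf{x}\in R_0$, to $\mathbf{x}-\mathbf{1}$ w.p. $\frac{k-(n-1)}{k}$ and to $\mathbf{x}+\mathbf{e}_l$ w.p. $\frac1k$ ($l=1,\dots,n-1$); from $\mathbf{x}\in R_j$, $1\le j\le n-2$, to $\mathbf{x}+\mathbf{e}_l$ w.p. $\frac{k-(n-1-j)}{kj}$ if $x_l=0$ and w.p. $\frac1k$ if $x_l\ge1$; from $\mathbf{0}$ to $\mathbf{e}_l$ w.p. $\frac1{n-1}$. Let $S=\{\mathbf{x}\in\mathbb{N}^{n-1}:x_i\ge1\ \forall i\}$, $S^c$ its complement in $\mathbb{N}^{n-1}$, and $S^\star=\{\mathbf{x}\in S:\mathbf{x}-\mathbf{1}\notin S\}$ (elements of $S$ with at least one entry equal to $1$). For $\mathbf{x}\in S^c$ and $\mathbf{y}\in S^\star$, $q^\star(\mathbf{x},\mathbf{y})$ is the probability that $X$ started at $\mathbf{x}$ first enters $S$ at the state $\mathbf{y}$. For $j=1,\dots,n-1$, $E_j$ is the set of $\mathbf{r}\in\mathbb{N}^{n-1}$ with $r_i\ge1$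 for $1\le i\le j$, $r_l\ge0$ for $j<l\le n-1$, and at least one of $r_1,\dots,r_j$ equal to $1$. *)

From HB Require Import structures.
From mathcomp Require Import all_boot all_order all_algebra.
From mathcomp Require Import all_classical all_reals all_analysis.
Set Implicit Arguments. Unset Strict Implicit. Unset Printing Implicit Defensive.
Import Order.TTheory GRing.Theory Num.Theory.
Local Open Scope ring_scope.

(* States: N^m with m = n-1; coordinate i+1 of the paper is index i : 'I_m. *)
Definition vec (m : nat) := {ffun 'I_m -> nat}.

Section Chain.
Variables (R : realType) (n k : nat).
Local Notation m := n.-1.

(* number of zero entries: x \in R_j  iff  nzeros x = j *)
Definition nzeros (x : vec m) : nat := #|[set i | x i == 0%N]|.
Definition incr (x : vec m) (l : 'I_m) : vec m := [ffun i => (x i + (i == l))%N].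
(* x - 1 (only used for x in R_0, where it is exact) *)
Definition decr (x : vec m) : vec m := [ffun i => (x i).-1].
Definition vadd (x r : vec m) : vec m := [ffun i => (x i + r i)%N].
Definition vnorm (r : vec m) : nat := (\sum_(i < m) r i)%N.

Definition inS (x : vec m) : bool := [forall i, (0 < x i)%N].
Definition inSstar (x : vec m) : bool := inS x && ~~ inS (decr x).

Definition trans (x y : vec m) : R :=
  let z := nzeros x in
  if z == 0%N then
    (if y == decr x then (k - m)%:R / k%:R
     else if [exists l, y == incr x l] then k%:R^-1 else 0)
  else if (z < m)%N then
    match [pick l | y == incr x l] with
    | Some l => if x l == 0%N then (k - (m - z))%:R / (k * z)%:R else k%:R^-1
    | None => 0
    end
  else (* x = 0 *)
    (if [exists l, y == incr x l] then m%:R^-1 else 0).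

(* All states reachable in one step (a superset of the support of trans x). *)
Definition succs (x : vec m) : seq (vec m) :=
  undup (decr x :: [seq incr x l | l <- enum 'I_m]).

(* hit N x y = P_x(X_1,...,X_N not in S, X_{N+1} = y in S):
   probability that the chain started at x first enters S at time N+1 at y. *)
Fixpoint hit (N : nat) (x y : vec m) : R :=
  match N with
  | 0%N => trans x y * (inS y)%:R
  | N'.+1 => \sum_(z <- succs x | ~~ inS z) trans x z * hit N' z y
  end.

Definition qstar (x y : vec m) : \bar R := (\sum_(N <oo) (hit N x y)%:E)%E.

(* E_j (paper indices 1..j are 'I_m indices 0..j-1) *)
Definition inEj (j : nat) (r : vec m) : bool :=
  [forall i : 'I_m, ((i < j)%N ==> (1 <= r i)%N)]
  && [exists l : 'I_m, ((l < j)%N && (r l == 1%N))].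

Definition qformula (j : nat) (r : vec m) : R :=
  'C(k - n + j + 1, k - n + 1)%:R
  * ((vnorm r).-1`!%:R / (\prod_(i < m) (r i)`!)%:R)
  * (k%:R^-1) ^+ vnorm r
  * (\sum_(l < m | (l < j)%N) (r l == 1%N))%:R.

End Chain.

Arguments nzeros {n} x.
Arguments incr {n} x l.
Arguments decr {n} x.
Arguments vadd {n} x r.
Arguments vnorm {n} r.
Arguments inS {n} x.
Arguments inSstar {n} x.
Arguments inEj {n} j r.
Arguments trans R n k x y : clear implicits.
Arguments hit R n k N x y : clear implicits.
Arguments qstar R n k x y : clear implicits.
Arguments qformula R n k j r : clear implicits.

(* While the chain has a zero coordinate it only moves up, x -> x + e_l with
   probability [pstep x l], so it first enters S from y at some y + r, after
   |r| steps, along a monotone lattice path whose last step fills the last zero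
   coordinate, which therefore ends at 1.  Along every such path the factors
   (k-m+z)/(k z) met while the number z of zeros decreases, together with the
   factors 1/k, multiply to C(k-m+z, z) / k^|r|, and the paths are counted by a
   multinomial coefficient; the resulting closed form [hit_formula] is checked
   by induction on the number of steps.  The entry probabilities have total
   mass 1 because one step lowers the expected number of zeros z by
   [pfill z] >= z/k, so the probability of staying outside S for N steps is at
   most z (1 - 1/k)^N. *)

From HB Require Import structures.
From mathcomp Require Import all_boot all_order all_algebra.
From mathcomp Require Import all_classical all_reals all_analysis.
From mathcomp Require Import zify ring lra.
Import Order.TTheory GRing.Theory Num.Theory numFieldNormedType.Exports.
Local Open Scope ring_scope.
Set Implicit Arguments. Unset Strict Implicit. Unset Printing Implicit Defensive.

Section ESums.
Variable R : realType.
Local Open Scope ereal_scope.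

Lemma esumZl (T : choiceType) (I : set T) (a : T -> \bar R) (r : R) :
  (0 <= r)%R -> (forall i, I i -> 0 <= a i) ->
  \esum_(i in I) (r%:E * a i) = r%:E * \esum_(i in I) a i.
Proof.
move=> r_ge0 a_ge0; rewrite /esum -ereal_supZl //; last first.
  by apply/set0P; exists 0, set0; [exact: fsets_set0 | rewrite fsbig_set0].
have sumZ A : fsets I A -> \sum_(i \in A) (r%:E * a i) = r%:E * \sum_(i \in A) a i.
  move=> [finA AI]; rewrite !fsbig_finite // big_seq [in RHS]big_seq.
  by rewrite ge0_sume_distrr // => i; rewrite in_fset_set // inE => /AI /a_ge0.
congr ereal_sup; apply/seteqP; split => x.
  by move=> [A IA <-]; exists (\sum_(i \in A) a i); [exists A | rewrite sumZ].
by move=> [y [A IA <-] <-]; exists A => //; rewrite sumZ.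
Qed.

Lemma esumT_single (T : choiceType) (t : T) (a : T -> \bar R) :
  0 <= a t -> (forall i, i != t -> a i = 0) -> \esum_(i in [set: T]) a i = a t.
Proof.
move=> at_ge0 a_eq0; rewrite -(esum_set1 at_ge0) [RHS]esum_mkcond.
apply: eq_esum => i _; case: (eqVneq i t) => [->|it]; first by rewrite ifT // inE.
rewrite a_eq0 // ifF //; apply/negbTE/negP; rewrite inE => /= it_eq.
by rewrite it_eq eqxx in it.
Qed.

Lemma eseries_single (N0 : nat) (a : nat -> \bar R) :
  (forall N, 0 <= a N) -> (forall N, N != N0 -> a N = 0) ->
  \sum_(N <oo) a N = a N0.
Proof. by move=> a_ge0 a_eq0; rewrite nneseries_esumT // (esumT_single (t := N0)). Qed.

Lemma esum_interchange (T1 T2 : choiceType) (a : T1 -> T2 -> \bar R) :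
  (forall i j, 0 <= a i j) ->
  \esum_(i in [set: T1]) \esum_(j in [set: T2]) a i j =
  \esum_(j in [set: T2]) \esum_(i in [set: T1]) a i j.
Proof.
move=> a_ge0; rewrite !esum_esum //.
rewrite (reindex_esum ([set: T2]%classic `*`` (fun=> [set: T1]%classic)) _
  (fun x => (x.2, x.1))) //.
split => //= [[i1 i2] [j1 j2] _ _ [-> ->] //|[i1 i2] _].
by exists (i2, i1).
Qed.

End ESums.

Lemma card_ord_lt m j : (j <= m)%N -> #|[set i : 'I_m | (i < j)%N]| = j.
Proof.
move=> j_le_m.
have -> : [set i : 'I_m | (i < j)%N] = widen_ord j_le_m @: [set: 'I_j]%SET.
  apply/setP => i; rewrite inE; apply/idP/imsetP => [i_lt_j|[i' _ ->]].
    by exists (Ordinal i_lt_j); [rewrite inE | apply: val_inj].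
  exact: (ltn_ord i').
rewrite card_imset ?finset.cardsT ?card_ord // => a b ab.
by apply: val_inj; exact: (congr1 val ab).
Qed.

Section Vectors.
Variable n : nat.
Local Notation m := n.-1.
Implicit Types (x y w : vec m) (l : 'I_m).

Lemma incrE x l i : incr x l i = (x i + (i == l))%N.
Proof. by rewrite ffunE. Qed.

Lemma incr_inj x : injective (incr x).
Proof.
move=> l l' /ffunP /(_ l); rewrite !incrE eqxx => /eqP.
by rewrite eqn_add2l eq_sym => /eqP; case: eqP.
Qed.

Lemma decr_neq_incr x l : decr x != incr x l.
Proof.
apply/eqP => /ffunP /(_ l); rewrite incrE ffunE eqxx addn1.
by case: (x l) => [|a] //= /eqP; rewrite ?ltn_eqF // eqn_leq ltnn.
Qed.

Lemma succsE x : succs x = decr x :: [seq incr x l | l <- enum 'I_m].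
Proof.
apply: undup_id => /=; apply/andP; split.
  by apply/mapP => -[l _] /eqP; rewrite (negbTE (decr_neq_incr x l)).
by rewrite map_inj_uniq ?enum_uniq //; exact: incr_inj.
Qed.

Lemma inSE x : inS x = (nzeros x == 0%N).
Proof.
rewrite /inS /nzeros cards_eq0; apply/forallP/eqP => [x_gt0|/setP x_nz i].
  by apply/setP => i; rewrite !inE; have := x_gt0 i; case: (x i).
by have := x_nz i; rewrite !inE lt0n => ->.
Qed.

Lemma nzeros_incr x l : nzeros (incr x l) = (nzeros x - (x l == 0%N))%N.
Proof.
rewrite /nzeros (cardsD1 l [set i | x i == 0%N]) inE.
have -> : [set i | incr x l i == 0%N] = [set i | x i == 0%N] :\ l.
  apply/setP => i; rewrite !inE incrE.
  by case: (eqVneq i l) => [->|]; rewrite ?addn1 ?addn0.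
by case: (x l == 0%N); rewrite ?add1n ?subn1 ?add0n ?subn0.
Qed.

Lemma nzeros_le x : (nzeros x <= m)%N.
Proof. by rewrite /nzeros; apply: leq_trans (max_card _) _; rewrite card_ord. Qed.

Lemma nzeros_eq_m x l : nzeros x = m -> x l = 0%N.
Proof.
move=> x_m; apply/eqP; have : [set i | x i == 0%N] = [set: 'I_m].
  apply/eqP; rewrite eqEcard finset.subsetT finset.cardsT card_ord /=.
  by rewrite -/(nzeros x) x_m.
by move/setP/(_ l); rewrite !inE.
Qed.

Lemma card_nonzero x : #|[pred i | x i != 0%N]| = (m - nzeros x)%N.
Proof.
have -> : #|[pred i | x i != 0%N]| = #|~: [set i | x i == 0%N]|.
  by apply: eq_card => i; rewrite !inE.
by rewrite cardsCs finset.setCK card_ord.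
Qed.

Definition vsub w y : vec m := [ffun i => (w i - y i)%N].
Definition vle y w : bool := [forall i, (y i <= w i)%N].
(* The coordinates that can have been filled last by the chain on its way
   from [y] to its entry point [w] into S. *)
Definition nlast y w : nat := (\sum_l ((y l == 0%N) && (w l == 1%N)))%N.

Lemma vsubE w y i : vsub w y i = (w i - y i)%N.
Proof. by rewrite ffunE. Qed.

Lemma vleP y w : reflect (forall i, (y i <= w i)%N) (vle y w).
Proof. exact: forallP. Qed.

Lemma vle_incr y w l : vle (incr y l) w = vle y w && (y l < w l)%N.
Proof.
apply/vleP/andP => [le_yw|[/vleP le_yw lt_yw] i].
  split; last by have := le_yw l; rewrite incrE eqxx addn1.
  by apply/vleP => i; apply: leq_trans (le_yw i); rewrite incrE leq_addr.
by rewrite incrE; case: eqP => [->|_]; rewrite ?addn1 ?addn0.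
Qed.

Lemma vsub_incr w y l i : vsub w (incr y l) i = (vsub w y i - (i == l))%N.
Proof. by rewrite !vsubE incrE subnDA. Qed.

Lemma vnorm_vsub_incr w y l : (y l < w l)%N ->
  vnorm (vsub w y) = (vnorm (vsub w (incr y l))).+1.
Proof.
move=> lt_yw; rewrite /vnorm (bigD1 l) //= [in RHS](bigD1 l) //= vsub_incr eqxx.
rewrite -addSn vsubE subn1 prednK ?subn_gt0 //; congr addn.
by apply: eq_bigr => i /negbTE il; rewrite vsub_incr il subn0.
Qed.

Lemma prod_fact_vsub_incr w y l : (y l < w l)%N ->
  (\prod_i (vsub w (incr y l) i)`! * vsub w y l)%N = (\prod_i (vsub w y i)`!)%N.
Proof.
move=> lt_yw; rewrite (bigD1 l) //= [in RHS](bigD1 l) //= vsub_incr eqxx.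
rewrite (eq_bigr (fun i => (vsub w y i)`!)); last first.
  by move=> i /negbTE il; rewrite vsub_incr il subn0.
have -> : vsub w y l = (vsub w y l).-1.+1 by rewrite prednK // vsubE subn_gt0.
by rewrite subn1 /= factS mulnC mulnA.
Qed.

Lemma nlast_incr y w l :
  (nlast (incr y l) w + ((y l == 0%N) && (w l == 1%N)))%N = nlast y w.
Proof.
rewrite /nlast (bigD1 l) //= [in RHS](bigD1 l) //= incrE eqxx addn1 add0n addnC.
by congr addn; apply: eq_bigr => i /negbTE il; rewrite incrE il addn0.
Qed.

Lemma nlast_single_zero y w l : (forall i, i != l -> 0 < y i)%N ->
  nlast y w = ((y l == 0%N) && (w l == 1%N)).
Proof.
move=> y_gt0; rewrite /nlast (bigD1 l) //= big1 ?addn0 // => i /y_gt0.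
by case: (y i).
Qed.

Lemma vle_vnorm1 y w : vle y w -> vnorm (vsub w y) = 1%N -> exists l, w = incr y l.
Proof.
move=> /vleP le_yw; rewrite /vnorm.
case: (pickP (fun i => vsub w y i != 0%N)) => [l wl_neq0|w_eq]; last first.
  by rewrite big1 // => i _; apply/eqP/negbFE/w_eq.
rewrite (bigD1 l) //=; move: wl_neq0; case d_l: (vsub w y l) => [|[|a]] //= _ [].
move/eqP; rewrite sum_nat_eq0 => /forallP rest; exists l.
apply/ffunP => i; rewrite incrE; case: (eqVneq i l) => [->|il].
  by rewrite -(subnKC (le_yw l)) -vsubE d_l.
move: (rest i); rewrite il vsubE addn0 subn_eq0 /= => le_wy.
by apply/eqP; rewrite eqn_leq le_wy le_yw.
Qed.

End Vectors.

Section Chain.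
Variables (R : realType) (n k : nat).
Hypothesis m_lt_k : (n.-1 < k)%N.
Local Notation m := n.-1.
Local Notation trans := (trans R n k).
Local Notation hit := (hit R n k).
Implicit Types (x y w : vec m) (l : 'I_m).

Lemma k_gt0 : (0 < k)%N.
Proof. exact: leq_ltn_trans m_lt_k. Qed.

Lemma natrk_neq0 : (k%:R : R) != 0.
Proof. by rewrite pnatr_eq0 -lt0n k_gt0. Qed.

(* At x = 0 this agrees with the rule 1/m of [trans]: (k - m + m)/(k m) = 1/m. *)
Definition pstep x l : R :=
  if x l == 0%N then (k - m + nzeros x)%:R / (k * nzeros x)%:R else k%:R^-1.

(* The probability that a step from a state with z zeros fills one of them. *)
Definition pfill z : R := (k - m + z)%:R / k%:R.

Lemma pstep_ge0 x l : 0 <= pstep x l.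
Proof. by rewrite /pstep; case: ifP => _; rewrite ?divr_ge0 ?invr_ge0 ?ler0n. Qed.

Lemma trans_ge0 x y : 0 <= trans x y.
Proof.
rewrite /trans; case: ifP => _.
  by do 2?case: ifP => _; rewrite ?divr_ge0 ?invr_ge0 ?ler0n.
case: ifP => _; last by case: ifP => _; rewrite ?invr_ge0 ?ler0n.
by case: pickP => [l _|//]; case: ifP => _; rewrite ?divr_ge0 ?invr_ge0 ?ler0n.
Qed.

Lemma trans_incr x l : (0 < nzeros x)%N -> trans x (incr x l) = pstep x l.
Proof.
move=> x_gt0; rewrite /trans /pstep /= eqn0Ngt x_gt0 /=.
have x_le := nzeros_le x.
case: ltnP => x_lt.
  case: pickP => [l' /eqP /incr_inj <-|]; last by move/(_ l); rewrite eqxx.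
  by have -> : (k - (m - nzeros x) = k - m + nzeros x)%N by lia.
have x_m : nzeros x = m by lia.
have -> : [exists l', incr x l == incr x l'] by apply/existsP; exists l.
rewrite (nzeros_eq_m l x_m) eqxx x_m subnK; last exact: ltnW.
have m_neq0 : (m%:R : R) != 0 by rewrite pnatr_eq0 -lt0n -x_m.
by rewrite natrM invfM mulrA mulfV ?mul1r // natrk_neq0.
Qed.

Lemma trans_other x w : (0 < nzeros x)%N -> (forall l, w != incr x l) ->
  trans x w = 0.
Proof.
move=> x_gt0 w_neq; rewrite /trans /= eqn0Ngt x_gt0 /=.
case: ifP => _.
  by case: pickP => [l wl|//]; have := w_neq l; rewrite wl.
by case: existsP => [[l wl]|//]; have := w_neq l; rewrite wl.
Qed.

Lemma trans_sum x w : (0 < nzeros x)%N ->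
  trans x w = \sum_l (if w == incr x l then pstep x l else 0).
Proof.
move=> x_gt0; case: (pickP (fun l => w == incr x l)) => [l /eqP ->|w_neq].
  rewrite trans_incr // (bigD1 l) //= eqxx big1 ?addr0 // => l' /negbTE.
  by rewrite (inj_eq (@incr_inj _ x)) eq_sym => ->.
by rewrite trans_other ?big1 // => l; rewrite w_neq.
Qed.

Lemma big_succs x (P : pred (vec m)) (g : vec m -> R) : (0 < nzeros x)%N ->
  \sum_(z <- succs x | P z) trans x z * g z =
  \sum_l (if P (incr x l) then pstep x l * g (incr x l) else 0).
Proof.
move=> x_gt0; rewrite succsE big_cons.
rewrite trans_other // ?mul0r; last by move=> l; exact: decr_neq_incr.
rewrite ?add0r big_map big_enum_cond /= big_mkcond /= if_same.
by apply: eq_bigr => l _; rewrite trans_incr.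
Qed.

Lemma sum_pstep_nzeros x (f : nat -> R) : (0 < nzeros x)%N ->
  \sum_l pstep x l * f (nzeros (incr x l)) =
  pfill (nzeros x) * f (nzeros x).-1 + (1 - pfill (nzeros x)) * f (nzeros x).
Proof.
move=> x_gt0; rewrite (bigID (fun l => x l == 0%N)) /=.
rewrite (eq_bigr (fun=>
    (k - m + nzeros x)%:R / (k * nzeros x)%:R * f (nzeros x).-1)); last first.
  by move=> l xl; rewrite /pstep xl nzeros_incr xl subn1.
rewrite [X in _ + X](eq_bigr (fun=> k%:R^-1 * f (nzeros x))); last first.
  by move=> l /negbTE xl; rewrite /pstep xl nzeros_incr xl subn0.
rewrite !sumr_const card_nonzero.
have -> : #|[pred i | x i == 0%N]| = nzeros x by rewrite /nzeros cardsE.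
have x_le := nzeros_le x; rewrite /pfill.
move: (nzeros x) x_gt0 x_le => z z_gt0 z_le.
have z_neq0 : (z%:R : R) != 0 by rewrite pnatr_eq0 -lt0n.
rewrite -(mulr_natr _ z) -(mulr_natr _ (m - z)) natrM natrD !natrB; [|lia|lia].
by field; rewrite z_neq0 natrk_neq0.
Qed.

Lemma sum_pstep x : (0 < nzeros x)%N -> \sum_l pstep x l = 1.
Proof.
move=> x_gt0; rewrite -(eq_bigr _ (fun l _ => mulr1 (pstep x l))).
by rewrite (sum_pstep_nzeros (fun=> 1)) // !mulr1 addrC subrK.
Qed.

Lemma hitS N x w : (0 < nzeros x)%N ->
  hit N.+1 x w =
  \sum_l (if ~~ inS (incr x l) then pstep x l * hit N (incr x l) w else 0).
Proof. by move=> x_gt0; rewrite /= (big_succs (fun z => ~~ inS z)). Qed.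

Lemma hit_ge0 N x w : 0 <= hit N x w.
Proof.
elim: N x => [|N IH] x /=; first by rewrite mulr_ge0 ?trans_ge0 ?ler0n.
by apply: sumr_ge0 => z _; rewrite mulr_ge0 ?trans_ge0.
Qed.

Definition kbin z : nat := 'C(k - m + z, z).

Lemma kbinS z : (z.+1 * kbin z.+1 = (k - m + z.+1) * kbin z)%N.
Proof. by rewrite /kbin -mul_bin_diag addnS. Qed.

Lemma pstep_kbin y l : (0 < nzeros (incr y l))%N ->
  pstep y l * (kbin (nzeros (incr y l)))%:R = (kbin (nzeros y))%:R / k%:R.
Proof.
rewrite nzeros_incr /pstep; case: eqP => _; last by rewrite subn0 mulrC.
case: (nzeros y) => [|z]; rewrite ?subn1 //= => _.
have /(congr1 (fun a => a%:R : R)) := kbinS z; rewrite !natrM => kbin_z.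
by rewrite mulrAC -kbin_z; field; rewrite natrk_neq0 addrC natr1 pnatr_eq0.
Qed.

Definition hit_support N y w : bool :=
  [&& vle y w, inS w & vnorm (vsub w y) == N.+1].

Definition hit_weight N y w : R :=
  (kbin (nzeros y))%:R * k%:R^-1 ^+ N.+1 * (N`!%:R / (\prod_i (vsub w y i)`!)%:R).

Definition hit_formula N y w : R :=
  if hit_support N y w then hit_weight N y w * (nlast y w)%:R else 0.

Lemma prod_fact_neq0 y w : (\prod_i (vsub w y i)`!)%:R != 0 :> R.
Proof. by rewrite pnatr_eq0 -lt0n prodn_gt0 // => i; exact: fact_gt0. Qed.

Lemma hit_formula_step_term N y w l :
  (if ~~ inS (incr y l) then pstep y l * hit_formula N (incr y l) w else 0) =
  if hit_support N.+1 y w then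
    hit_weight N y w / k%:R *
      ((vsub w y l)%:R * ((nlast y w)%:R - ((y l == 0%N) && (w l == 1%N))%:R))
  else 0.
Proof.
case: ifP => [yl_notS|/negbFE yl_S]; last first.
  have y_gt0 i : i != l -> (0 < y i)%N.
    by move=> il; move/forallP: yl_S => /(_ i); rewrite incrE (negbTE il) addn0.
  by rewrite (nlast_single_zero w y_gt0) subrr !mulr0 if_same.
have yl_gt0 : (0 < nzeros (incr y l))%N by rewrite lt0n -inSE.
have [lt_yw|le_wy] := ltnP (y l) (w l); last first.
  rewrite /hit_formula /hit_support vle_incr ltnNge le_wy andbF /= mulr0.
  case: ifP => // /and3P[/vleP le_yw _ _].
  have -> : vsub w y l = 0%N by rewrite vsubE; apply/eqP; rewrite subn_eq0.
  by rewrite mul0r mulr0.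
rewrite /hit_formula /hit_support vle_incr lt_yw andbT (vnorm_vsub_incr lt_yw) eqSS.
case: ifP => _; last by rewrite mulr0.
have d_neq0 : (vsub w y l)%:R != 0 :> R by rewrite pnatr_eq0 vsubE subn_eq0 -ltnNge.
rewrite /hit_weight !(mulrA (pstep y l)) (pstep_kbin yl_gt0).
rewrite -(prod_fact_vsub_incr lt_yw) -(nlast_incr y w l) natrM natrD exprS.
by field; rewrite prod_fact_neq0 d_neq0 natrk_neq0.
Qed.

Lemma hit_formula_step N y w :
  \sum_l (if ~~ inS (incr y l) then pstep y l * hit_formula N (incr y l) w else 0) =
  hit_formula N.+1 y w.
Proof.
rewrite (eq_bigr _ (fun l _ => hit_formula_step_term N y w l)) /hit_formula.
case: ifP => [/and3P[_ _ /eqP norm_w]|_]; last by rewrite big1.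
have sum_d : \sum_l ((vsub w y l)%:R : R) = N.+2%:R.
  by rewrite -natr_sum -/(vnorm _) norm_w.
have sum_d_last : \sum_l ((vsub w y l)%:R * ((y l == 0%N) && (w l == 1%N))%:R : R)
    = (nlast y w)%:R.
  rewrite /nlast natr_sum; apply: eq_bigr => l _.
  case: (y l =P 0%N) => [yl0|_]; last by rewrite mulr0.
  case: (w l =P 1%N) => [wl1|_]; last by rewrite mulr0.
  by rewrite vsubE yl0 wl1 mulr1.
under eq_bigr do rewrite mulrBr.
rewrite -mulr_sumr sumrB -mulr_suml sum_d sum_d_last /hit_weight factS natrM !exprS.
by field; rewrite prod_fact_neq0 natrk_neq0.
Qed.

Lemma hit_formula0_incr y l : (0 < nzeros y)%N ->
  hit_formula 0 y (incr y l) = pstep y l * (inS (incr y l))%:R.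
Proof.
move=> y_gt0.
have vsub_yl i : vsub (incr y l) y i = (i == l) :> nat by rewrite vsubE incrE addKn.
have le_yl : vle y (incr y l) by apply/vleP => i; rewrite incrE leq_addr.
have norm_yl : vnorm (vsub (incr y l) y) = 1%N.
  rewrite /vnorm (bigD1 l) //= vsub_yl eqxx big1 // => i /negbTE il.
  by rewrite vsub_yl il.
have prod_yl : (\prod_i (vsub (incr y l) y i)`!)%N = 1%N.
  by rewrite big1 // => i _; rewrite vsub_yl; case: (i == l).
have nlast_yl : nlast y (incr y l) = (y l == 0%N) :> nat.
  rewrite /nlast (bigD1 l) //= incrE eqxx addn1 big1 ?addn0; first by case: (y l).
  by move=> i /negbTE il; rewrite incrE il addn0; case: (y i) => [|[]].
rewrite /hit_formula /hit_support /hit_weight le_yl norm_yl prod_yl nlast_yl eqxx andbT.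
case: (boolP (inS (incr y l))) => yl_S; last by rewrite mulr0.
have [yl0 y_1] : y l = 0%N /\ nzeros y = 1%N.
  move: yl_S; rewrite inSE nzeros_incr.
  by case: (y l =P 0%N) => [-> /eqP|_ /eqP]; rewrite ?subn1 ?subn0; lia.
rewrite /pstep /kbin yl0 y_1 eqxx bin1 fact0 muln1 /=.
by field; rewrite natrk_neq0.
Qed.

Lemma hitE N y w : (0 < nzeros y)%N -> hit N y w = hit_formula N y w.
Proof.
elim: N y w => [|N IH] y w y_gt0; last first.
  rewrite hitS // -hit_formula_step; apply: eq_bigr => l _.
  by case: ifP => // yl_notS; rewrite IH // lt0n -inSE.
case: (pickP (fun l => w == incr y l)) => [l /eqP ->|w_neq].
  by rewrite /= trans_incr // hit_formula0_incr.
rewrite /= trans_other ?mul0r //; last by move=> l; rewrite w_neq.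
rewrite /hit_formula /hit_support; case: ifP => // /and3P[le_yw _ /eqP norm_w].
by have [l w_eq] := vle_vnorm1 le_yw norm_w; have := w_neq l; rewrite w_eq eqxx.
Qed.

(* [surv N y] is the probability that the chain started at [y] does not enter
   S during its first N steps. *)
Fixpoint surv N y : R :=
  if N is N'.+1 then
    \sum_l (if ~~ inS (incr y l) then pstep y l * surv N' (incr y l) else 0)
  else 1.

Lemma surv_ge0 N y : 0 <= surv N y.
Proof.
elim: N y => [|N IH] y /=; first exact: ler01.
by apply: sumr_ge0 => l _; case: ifP => _; rewrite ?mulr_ge0 ?pstep_ge0.
Qed.

Lemma esum_hit N y : (0 < nzeros y)%N ->
  \esum_(w in [set: vec m]) (hit N y w)%:E = (surv N y - surv N.+1 y)%:E.
Proof.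
elim: N y => [|N IH] y y_gt0.
  under eq_esum do rewrite /= (trans_sum _ y_gt0) mulr_suml -sumEFin.
  rewrite esum_sum; last first.
    by move=> w l _ _; case: ifP => _; rewrite lee_fin ?mulr_ge0 ?pstep_ge0 ?mul0r.
  rewrite (eq_bigr (fun l => (pstep y l * (inS (incr y l))%:R)%:E)); last first.
    move=> l _; rewrite (esumT_single (t := incr y l)) ?eqxx //.
      by rewrite lee_fin mulr_ge0 ?pstep_ge0.
    by move=> w /negbTE ->; rewrite mul0r.
  rewrite sumEFin /=; congr EFin; apply/eqP; rewrite eq_sym subr_eq -big_split /=.
  rewrite -{1}(sum_pstep y_gt0); apply/eqP/eq_bigr => l _.
  by case: (inS _); rewrite /= ?mulr1 ?mulr0 ?addr0 ?add0r.
under eq_esum do rewrite (hitS _ _ y_gt0) -sumEFin.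
rewrite esum_sum; last first.
  by move=> w l _ _; case: ifP => _; rewrite lee_fin ?mulr_ge0 ?pstep_ge0 ?hit_ge0.
rewrite [in RHS]/= -sumrB -sumEFin; apply: eq_bigr => l _.
case: ifP => [yl_notS|_]; last by rewrite subrr esum1.
under eq_esum do rewrite EFinM.
rewrite esumZl ?pstep_ge0 //; last by move=> w _; rewrite lee_fin hit_ge0.
have yl_gt0 : (0 < nzeros (incr y l))%N by rewrite lt0n -inSE.
by rewrite IH // -EFinM mulrBr.
Qed.

Lemma surv_le N y : (0 < nzeros y)%N ->
  surv N y <= (nzeros y)%:R * (1 - k%:R^-1) ^+ N.
Proof.
elim: N y => [|N IH] y y_gt0; first by rewrite expr0 mulr1 ler1n.
pose f z : R := z%:R * (1 - k%:R^-1) ^+ N.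
have surv_le_f : surv N.+1 y <= \sum_l pstep y l * f (nzeros (incr y l)).
  apply: ler_sum => l _; case: ifP => [yl_notS|/negbFE].
    by rewrite ler_wpM2l ?pstep_ge0 // IH // lt0n -inSE.
  by rewrite inSE /f => /eqP ->; rewrite mul0r mulr0.
apply: (le_trans surv_le_f); rewrite sum_pstep_nzeros // /f /pfill exprS.
have kinv_ge0 : 0 <= k%:R^-1 :> R by rewrite invr_ge0 ler0n.
have pfill_ge : (nzeros y)%:R * k%:R^-1 <= (k - m + nzeros y)%:R / k%:R :> R.
  by rewrite ler_pM2r ?invr_gt0 ?ltr0n ?k_gt0 // ler_nat leq_addl.
have theta_ge0 : 0 <= (1 - k%:R^-1) ^+ N :> R.
  by rewrite exprn_ge0 // subr_ge0 invf_le1 ?ler1n ?ltr0n ?k_gt0.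
rewrite -[(nzeros y).-1]subn1 natrB //; move: pfill_ge theta_ge0.
set c := k%:R^-1; set p := (k - m + nzeros y)%:R * c.
set t := (1 - c) ^+ N; set z := (nzeros y)%:R.
nra.
Qed.

Local Open Scope classical_set_scope.

Lemma surv_cvg0 y : (0 < nzeros y)%N -> surv ^~ y @ \oo --> 0.
Proof.
move=> y_gt0; apply: (squeeze_cvgr (f := cst 0)
  (h := fun N => (nzeros y)%:R * (1 - k%:R^-1) ^+ N)).
- by apply: nearW => N; rewrite surv_ge0 surv_le.
- exact: cvg_cst.
rewrite -[X in _ --> X](mulr0 (nzeros y)%:R); apply: cvgMr; apply: cvg_expr.
have : 0 < (k%:R^-1 : R) <= 1.
  by rewrite invr_gt0 invf_le1 ?ltr0n ?ler1n ?k_gt0.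
by case/andP => kinv_gt0 kinv_le1; rewrite ger0_norm; lra.
Qed.

Lemma total_hit y : (0 < nzeros y)%N ->
  (\sum_(N <oo) \esum_(w in [set: vec m]) (hit N y w)%:E = 1)%E.
Proof.
move=> y_gt0.
rewrite (eq_eseriesr (g := fun N => (surv N y - surv N.+1 y)%:E)); last first.
  by move=> N _; rewrite esum_hit.
have partial M : (\sum_(0 <= N < M) (surv N y - surv N.+1 y)%:E = (1 - surv M y)%:E)%E.
  rewrite sumEFin -[X in X%:E]opprK -sumrN; under eq_bigr do rewrite opprB.
  by rewrite telescope_sumr // opprB.
apply: cvg_lim => //; rewrite (eq_fun partial).
apply: cvg_EFin; first exact: nearW.
by rewrite -[X in _ --> X]subr0; apply: cvgB; [exact: cvg_cst | exact: surv_cvg0].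
Qed.

End Chain.

Section FirstEntryFromXj.
Variables (R : realType) (n k j : nat) (x : vec n.-1).
Hypotheses (m_lt_k : (n.-1 < k)%N) (hj : (1 <= j <= n.-1)%N).
Hypotheses (x_lt_j : forall i : 'I_n.-1, (i < j)%N -> x i = 0%N)
           (x_ge_j : forall i : 'I_n.-1, (j <= i)%N -> (1 <= x i)%N).
Local Notation m := n.-1.
Local Notation qstar := (qstar R n k).
Local Notation hit_formula := (hit_formula R k).

Lemma x_eq0 i : (x i == 0%N) = (i < j)%N.
Proof.
by case: (ltnP i j) => [/x_lt_j ->|/x_ge_j]; last case: (x i).
Qed.

Lemma nzeros_x : nzeros x = j.
Proof.
rewrite /nzeros -(@card_ord_lt m j); last by case/andP: hj.
by apply: eq_card => i; rewrite !inE x_eq0.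
Qed.

Lemma nzeros_x_gt0 : (0 < nzeros x)%N.
Proof. by rewrite nzeros_x; case/andP: hj. Qed.

Lemma inSstar_vadd r : inEj j r -> inSstar (vadd x r).
Proof.
case/andP => /forallP r_ge1 /existsP [l /andP [l_lt_j /eqP rl1]].
apply/andP; split.
  apply/forallP => i; rewrite ffunE; case: (ltnP i j) => [i_lt_j|/x_ge_j].
    by have := r_ge1 i; rewrite i_lt_j addnC => /ltn_addr.
  by move/ltn_addr.
by apply/negP => /forallP /(_ l); rewrite !ffunE x_lt_j // rl1.
Qed.

Lemma hit_formula_neq0 N w :
  hit_formula N x w != 0 -> exists2 r, inEj j r & w = vadd x r.
Proof.
rewrite /hit_formula /hit_support.
case: ifP => [/and3P [/vleP le_xw w_S _]|]; last by rewrite eqxx.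
case: (boolP (nlast x w == 0%N)) => [/eqP ->|nlast_neq0 _].
  by rewrite mulr0 eqxx.
exists (vsub w x); last by apply/ffunP => i; rewrite !ffunE subnKC.
apply/andP; split.
  apply/forallP => i; apply/implyP => i_lt_j; rewrite vsubE x_lt_j // subn0.
  by move/forallP: w_S => /(_ i).
move: nlast_neq0; rewrite /nlast sum_nat_eq0 => /forallPn [l] /=.
case: (x l =P 0%N) => // xl0; case: (w l =P 1%N) => // wl1 _.
by apply/existsP; exists l; rewrite -x_eq0 vsubE xl0 wl1 eqxx.
Qed.

Lemma qstarE w : qstar x w = (\sum_(N <oo) (hit_formula N x w)%:E)%E.
Proof. by apply: eq_eseriesr => N _; rewrite hitE // nzeros_x_gt0. Qed.

Lemma qstar_notin w : ~ (exists2 r, inEj j r & w = vadd x r) -> qstar x w = 0%E.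
Proof.
move=> w_notin; rewrite qstarE eseries0 // => N _ _.
by case: (eqVneq (hit_formula N x w) 0) => [->|/hit_formula_neq0].
Qed.

Lemma qstar_vadd r : inEj j r -> qstar x (vadd x r) = (qformula R n k j r)%:E.
Proof.
move=> r_Ej; have /andP[xr_S _] := inSstar_vadd r_Ej.
have vsub_xr : vsub (vadd x r) x = r by apply/ffunP => i; rewrite vsubE ffunE addKn.
have le_xr : vle x (vadd x r) by apply/vleP => i; rewrite ffunE leq_addr.
have r_gt0 : (0 < vnorm r)%N.
  case/andP: r_Ej => _ /existsP [l /andP [_ /eqP rl1]].
  by rewrite /vnorm (bigD1 l) //= rl1.
rewrite qstarE (eseries_single (N0 := (vnorm r).-1)); first last.
- move=> N N_neq; rewrite /hit_formula /hit_support vsub_xr ifF //; apply/negbTE.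
  rewrite !negb_and; apply/orP; right; apply/orP; right.
  by apply: contraNN N_neq => /eqP ->.
- by move=> N; rewrite lee_fin -hitE ?nzeros_x_gt0 // hit_ge0.
rewrite /hit_formula /hit_support /hit_weight le_xr xr_S vsub_xr prednK //.
rewrite eqxx nzeros_x /=.
have kbin_j : kbin n k j = 'C(k - n + j + 1, k - n + 1).
  rewrite /kbin; have -> : (k - m + j = k - n + j + 1)%N by lia.
  rewrite -bin_sub; last lia.
  by congr ('C(_, _)); lia.
have nlast_xr : nlast x (vadd x r) = (\sum_(l < m | (l < j)%N) (r l == 1%N))%N.
  rewrite /nlast [RHS]big_mkcond /=; apply: eq_bigr => l _; rewrite ffunE x_eq0.
  by case: ltnP => //= l_lt_j; rewrite x_lt_j.
by rewrite kbin_j nlast_xr /qformula; congr (_ * _)%:E; exact: mulrAC.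
Qed.

Lemma esum_qstar :
  esum [set r : vec m | inEj j r] (fun r => qstar x (vadd x r)) = 1%E.
Proof.
rewrite -(esum_image [set r | inEj j r] (vadd x) (qstar x)); last first.
  move=> a b _ _ /ffunP ab; apply/ffunP => i.
  by have := ab i; rewrite !ffunE; exact: addnI.
rewrite esum_mkcond (eq_esum (b := qstar x)); last first.
  move=> w _; case: ifP => // /negbT w_notin; rewrite qstar_notin // => -[r r_Ej w_eq].
  by move/negP: w_notin; apply; rewrite in_setE; exists r.
have qstar_esum w : qstar x w = \esum_(N in [set: nat]) (hit R n k N x w)%:E.
  by rewrite /qstar nneseries_esumT // => N; rewrite lee_fin hit_ge0.
under eq_esum do rewrite qstar_esum.
rewrite esum_interchange => [|w N]; last by rewrite lee_fin hit_ge0.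
rewrite -nneseries_esumT ?total_hit ?nzeros_x_gt0 // => N.
by apply: esum_ge0 => w _; rewrite lee_fin hit_ge0.
Qed.

End FirstEntryFromXj.

Theorem lemma7p3 (R : realType) (n k : nat) (j : nat) (x : vec n.-1) :
  (3 <= n)%N -> (n <= k)%N -> (1 <= j <= n.-1)%N ->
  (forall i : 'I_n.-1, (i < j)%N -> x i = 0%N) ->
  (forall i : 'I_n.-1, (j <= i)%N -> (1 <= x i)%N) ->
  [/\ forall r : vec n.-1, inEj j r -> inSstar (vadd x r),
      forall r : vec n.-1, inEj j r ->
        qstar R n k x (vadd x r) = (qformula R n k j r)%:E,
      esum [set r : vec n.-1 | inEj j r] (fun r => qstar R n k x (vadd x r)) = 1%E
    & forall x' : vec n.-1, inSstar x' ->
        ~ (exists2 r : vec n.-1, inEj j r & x' = vadd x r) ->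
        qstar R n k x x' = 0%E].
Proof.
move=> n_ge3 n_le_k hj x_lt_j x_ge_j.
have m_lt_k : (n.-1 < k)%N by lia.
split.
- exact: inSstar_vadd.
- exact: qstar_vadd.
- exact: esum_qstar.
- by move=> x' _; exact: qstar_notin.
Qed.
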